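(* (i) For every $k\ge2$, $\alpha\in(1,2)$, $p\in(0,1)$ there exists $C^{\alpha,p}_{5,k}>0$ such that for all $n\in\mathbb{N}$ and $t\in\mathbb{R}$, $\big|\frac{\mathrm{d}R^{\alpha,p}_{n,1,k}(t)}{\mathrm{d}t}\big|\le C^{\alpha,p}_{5,k}|t|^{k-1}/n^{(k-\alpha)/\alpha}$. (ii) Let $\alpha\in(1,2)$, $p\in(0,1)$, and let $C_2>0$ be a constant such that $|x_n^{\alpha,p}(t)|/n\le\frac12$ for all $n\in\mathbb{N}$ and $|t|\le C_2n^{1/\alpha}$. Then there exists $C_5^{\alpha,p}>0$ such that for all $n\in\mathbb{N}$ and $|t|\le C_2n^{1/\alpha}$, $\big|\frac{\mathrm{d}x_n^{\alpha,p}(t)}{\mathrm{d}t}\big|\le C_5^{\alpha,p}n^{(\alpha-1)/\alpha}$.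
   Context: Let $p\in(0,1)$, $q=1-p$, $r=1/q$, $\alpha\in(1,2)$. Let $\mathbf{f}_{\alpha,p}(t)=\sum_{k\ge1}e^{\mathrm{i}tr^{k/\alpha}}q^{k-1}p$ and $x_n^{\alpha,p}(t)=n(\mathbf{f}_{\alpha,p}(t/n^{1/\alpha})-1)$ (differentiable since $\alpha>1$; a constant $C_2$ as in (ii) exists). Let $\gamma_n=n/r^{\lceil\log_rn\rceil}$ and for $k\ge2$ \[R^{\alpha,p}_{n,1,k}(t)=-\sum_{m=\lceil\log_rn\rceil}^\infty\Big(\exp\Big\{\frac{\mathrm{i}t}{r^{m/\alpha}\gamma_n^{1/\alpha}}\Big\}-\sum_{j=0}^{k-1}\frac{(\mathrm{i}t)^j}{j!\,r^{jm/\alpha}\gamma_n^{j/\alpha}}\Big)\frac{p\gamma_n}{q}r^m,\] which is differentiable in $t$. *)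

From Stdlib Require Import Reals ZArith.
From Coquelicot Require Import Coquelicot.
Open Scope R_scope.

Definition Cexpi (theta : R) : C := (cos theta, sin theta).

(* Sum of a complex series, taken componentwise (Coquelicot's Series is real-valued). *)
Definition CSeries (a : nat -> C) : C :=
  (Series (fun k => Re (a k)), Series (fun k => Im (a k))).

Definition Rceil (x : R) : Z := (- Int_part (- x))%Z.

(* f_{alpha,p}(t) = sum_{k>=1} e^{i t r^{k/alpha}} q^{k-1} p,  q = 1-p, r = 1/q;
   reindexed with k = j+1, j >= 0 *)
Definition f_ap (alpha p t : R) : C :=
  let q := 1 - p in let r := 1 / q in
  CSeries (fun j => (Cexpi (t * Rpower r (INR (S j) / alpha)) * RtoC (q ^ j * p))%C).

Definition x_n (alpha p : R) (n : nat) (t : R) : C :=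
  (RtoC (INR n) * (f_ap alpha p (t / Rpower (INR n) (1 / alpha)) - 1))%C.

(* m0 = ceil(log_r n), as a natural number (nonnegative for n >= 1) *)
Definition m0 (p : R) (n : nat) : nat :=
  let r := 1 / (1 - p) in Z.to_nat (Rceil (ln (INR n) / ln r)).

Definition gamma_n (p : R) (n : nat) : R :=
  let r := 1 / (1 - p) in INR n / r ^ (m0 p n).

Definition R_n1k (alpha p : R) (n k : nat) (t : R) : C :=
  let q := 1 - p in let r := 1 / q in let g := gamma_n p n in
  (- CSeries (fun i =>
      let m := (m0 p n + i)%nat in
      ((Cexpi (t / (Rpower r (INR m / alpha) * Rpower g (1 / alpha)))
        - sum_n (G := C_AbelianMonoid) (fun j =>
             (pow_n (K := C_Ring) (Ci * RtoC t) j
              / RtoC (INR (fact j) * Rpower r (INR j * INR m / alpha)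
                       * Rpower g (INR j / alpha)))%C) (k - 1))
       * RtoC (p * g / q * r ^ m))%C))%C.

From Stdlib Require Import Reals ZArith Lra Lia.
From Coquelicot Require Import Coquelicot.
Open Scope R_scope.

(** Both bounds come from differentiating the defining series term by term.

    For (ii), the derivative of [f_ap] is the series of [i r^((j+1)/alpha) q^j p e^(...)],
    which converges absolutely because [r^(1/alpha) q < 1], i.e. [alpha > 1]; the inner
    map [t |-> t / n^(1/alpha)] contributes the factor [n * n^(-1/alpha)].

    For (i), the summand of [R_n1k] with index [m] is [p gamma_n r^m / q] times the Taylor
    remainder [E_k(x) = e^(ix) - sum_(j<k) (ix)^j/j!] at [x = t / W_m], where
    [W_m = r^(m/alpha) gamma_n^(1/alpha)].  Since [E_k' = i E_(k-1)], the mean value theorem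
    gives [|E_(k-1)(x)| <= 2^(k-1) |x|^(k-1)], so the derivative of that summand is at most
    [2^(k-1) |t|^(k-1)] times the weight [p gamma_n r^m / (q W_m^k)].  As
    [gamma_n r^(m0) = n], this weight is [(p/q) n^(1-k/alpha) rho^(m-m0)] with
    [rho = r^(1-k/alpha) < 1] (because [k >= 2 > alpha]), and summing the geometric series
    leaves the factor [n^(-(k-alpha)/alpha)]. *)

Lemma is_derive_pair (f g : R -> R) x a b :
  is_derive f x a -> is_derive g x b ->
  is_derive (fun y => (f y, g y) : C) x ((a, b) : C).
Proof.
  intros Hf Hg. unfold is_derive in *.
  eapply filterdiff_ext_lin.
  - apply (filterdiff_comp_2 f g (fun u v => (u, v)) _ _ (fun u v => (u, v)) Hf Hg).
    eapply filterdiff_ext_lin.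
    eapply filterdiff_ext. 2: apply filterdiff_id.
    all: intros u; simpl; try reflexivity; destruct u; reflexivity.
Qed.

Lemma is_derive_Re (f : R -> C) x l :
  is_derive f x l -> is_derive (fun y => Re (f y)) x (Re l).
Proof.
  intros H. eapply filterdiff_ext_lin.
  - apply (filterdiff_comp f (fun z : C => fst z) _ (fun z : C => fst z) H).
    apply filterdiff_linear, is_linear_fst.
  - reflexivity.
Qed.

Lemma is_derive_Im (f : R -> C) x l :
  is_derive f x l -> is_derive (fun y => Im (f y)) x (Im l).
Proof.
  intros H. eapply filterdiff_ext_lin.
  - apply (filterdiff_comp f (fun z : C => snd z) _ (fun z : C => snd z) H).
    apply filterdiff_linear, is_linear_snd.
  - reflexivity.
Qed.

Lemma is_derive_Cminus (f g : R -> C) x a b :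
  is_derive f x a -> is_derive g x b -> is_derive (fun y => f y - g y)%C x (a - b)%C.
Proof. apply (is_derive_minus (V := C_R_NormedModule)). Qed.

Lemma is_linear_Cmult_l (w : C) : is_linear (U := C_R_NormedModule) (fun z : C => w * z)%C.
Proof.
  split.
  - intros z z'. change (w * (z + z') = w * z + w * z')%C. ring.
  - intros k z. rewrite !scal_R_Cmult. change (@eq C (w * (k * z)) (k * (w * z)))%C. ring.
  - exists (Cmod w + 1). split; [pose proof (Cmod_ge_0 w); lra|].
    intros z. rewrite <- !Cmod_norm, Cmod_mult.
    pose proof (Cmod_ge_0 z). nra.
Qed.

Lemma is_derive_Cmult_l (w : C) (f : R -> C) x l :
  is_derive f x l -> is_derive (fun y => w * f y)%C x (w * l)%C.
Proof.
  intros H. eapply filterdiff_ext_lin.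
  - apply (filterdiff_comp f (fun z : C => w * z)%C _ (fun z : C => w * z)%C H).
    apply filterdiff_linear, is_linear_Cmult_l.
  - intros y. rewrite !scal_R_Cmult. change (@eq C (w * (y * l)) (y * (w * l)))%C. ring.
Qed.

Lemma is_derive_Cmult_r (w : C) (f : R -> C) x l :
  is_derive f x l -> is_derive (fun y => f y * w)%C x (l * w)%C.
Proof.
  intros H. rewrite Cmult_comm.
  apply (is_derive_ext (fun y => w * f y)%C); [intros y; apply Cmult_comm|].
  now apply is_derive_Cmult_l.
Qed.

Lemma is_derive_Cexpi x : is_derive Cexpi x (Ci * Cexpi x)%C.
Proof.
  replace (Ci * Cexpi x)%C with ((- sin x, cos x) : C)
    by (unfold Cexpi, Cmult; simpl; f_equal; ring).
  apply (is_derive_pair cos sin); auto_derive; auto; ring.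
Qed.

Lemma im_le_Cmod (c : C) : Rabs (Im c) <= Cmod c.
Proof. eapply Rle_trans; [apply Rmax_r | apply Rmax_Cmod]. Qed.

Lemma Cmod_le_Rabs_Re_Im (c : C) : Cmod c <= Rabs (Re c) + Rabs (Im c).
Proof.
  pose proof (Rabs_pos (Re c)). pose proof (Rabs_pos (Im c)).
  unfold Cmod. rewrite <- (sqrt_pow2 (Rabs (Re c) + Rabs (Im c))) by lra.
  apply sqrt_le_1_alt. rewrite <- (pow2_abs (fst c)), <- (pow2_abs (snd c)).
  unfold Re, Im in *. nra.
Qed.

Lemma Cmod_Cexpi x : Cmod (Cexpi x) = 1.
Proof.
  unfold Cmod, Cexpi; cbn [fst snd]. rewrite <- sqrt_1, <- (sin2_cos2 x).
  f_equal. unfold Rsqr. ring.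
Qed.

Lemma Rabs_le_of_derive_bound (f f' : R -> R) x B :
  (forall y, is_derive f y (f' y)) -> f 0 = 0 ->
  (forall y, Rabs y <= Rabs x -> Rabs (f' y) <= B) -> Rabs (f x) <= B * Rabs x.
Proof.
  intros Hd H0 Hb.
  destruct (MVT_cor4 f f' 0 (Rabs x)) with (b := x) as [c [Hc1 Hc2]].
  { intros; apply Hd. }
  { rewrite Rminus_0_r; lra. }
  rewrite H0, !Rminus_0_r in Hc1. rewrite !Rminus_0_r in Hc2.
  rewrite Hc1, Rabs_mult.
  apply Rmult_le_compat_r; [apply Rabs_pos | now apply Hb].
Qed.

(* The factor 2 comes from applying the real mean value theorem to each component. *)
Lemma Cmod_le_of_derive_bound (f f' : R -> C) x B :
  (forall y, is_derive f y (f' y)) -> f 0 = 0%C ->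
  (forall y, Rabs y <= Rabs x -> Cmod (f' y) <= B) -> Cmod (f x) <= 2 * B * Rabs x.
Proof.
  intros Hd H0 Hb.
  assert (HRe : Rabs (Re (f x)) <= B * Rabs x).
  { apply (Rabs_le_of_derive_bound (fun y => Re (f y)) (fun y => Re (f' y))).
    - intros y. apply is_derive_Re, Hd.
    - now rewrite H0.
    - intros y Hy. eapply Rle_trans; [apply re_le_Cmod | now apply Hb]. }
  assert (HIm : Rabs (Im (f x)) <= B * Rabs x).
  { apply (Rabs_le_of_derive_bound (fun y => Im (f y)) (fun y => Im (f' y))).
    - intros y. apply is_derive_Im, Hd.
    - now rewrite H0.
    - intros y Hy. eapply Rle_trans; [apply im_le_Cmod | now apply Hb]. }
  pose proof (Cmod_le_Rabs_Re_Im (f x)). lra.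
Qed.

Lemma RtoC_neq_0 x : x <> 0 -> RtoC x <> 0%C.
Proof. intros Hx H. apply Hx. exact (f_equal Re H). Qed.

Definition expi_taylor_term (j : nat) (x : R) : C := ((Ci * RtoC x) ^ j / RtoC (INR (fact j)))%C.

Fixpoint expi_taylor_rem (k : nat) (x : R) : C :=
  match k with
  | O => Cexpi x
  | S k => (expi_taylor_rem k x - expi_taylor_term k x)%C
  end.

Lemma expi_taylor_rem_S k x :
  expi_taylor_rem (S k) x
  = (Cexpi x - sum_n (G := C_AbelianMonoid) (fun j => expi_taylor_term j x) k)%C.
Proof.
  induction k as [|k IH].
  - now rewrite sum_O.
  - rewrite sum_Sn. change (expi_taylor_rem (S k) x - expi_taylor_term (S k) x
      = Cexpi x - (sum_n (fun j => expi_taylor_term j x) k + expi_taylor_term (S k) x))%C.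
    rewrite IH. ring.
Qed.

Lemma expi_taylor_term_real j x :
  expi_taylor_term j x = (RtoC (x ^ j / INR (fact j)) * Ci ^ j)%C.
Proof.
  pose proof (INR_fact_neq_0 j).
  unfold expi_taylor_term. rewrite Cpow_mult_l, <- RtoC_pow.
  unfold Rdiv. rewrite RtoC_mult, RtoC_inv by exact H. field. now apply RtoC_neq_0.
Qed.

Lemma is_derive_expi_taylor_term j x :
  is_derive (expi_taylor_term (S j)) x (Ci * expi_taylor_term j x)%C.
Proof.
  apply (is_derive_ext (fun y => scal (y ^ S j / INR (fact (S j))) (Ci ^ S j)%C)).
  { intros y. now rewrite scal_R_Cmult, expi_taylor_term_real. }
  replace (Ci * expi_taylor_term j x)%C with (RtoC (x ^ j / INR (fact j)) * Ci ^ S j)%C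
    by (rewrite expi_taylor_term_real, Cpow_S; ring).
  rewrite <- scal_R_Cmult.
  apply (is_derive_scal_l (V := C_R_NormedModule) (fun y => y ^ S j / INR (fact (S j)))).
  auto_derive; [auto|].
  replace (match j with 0%nat => 1 | S _ => INR j + 1 end) with (INR j + 1)
    by (destruct j; simpl; ring).
  rewrite plus_INR, mult_INR.
  pose proof (INR_fact_neq_0 j). pose proof (pos_INR j).
  field. split; [auto|].
  replace (INR (fact j) + INR j * INR (fact j)) with ((INR j + 1) * INR (fact j)) by ring.
  apply Rmult_integral_contrapositive; split; [lra | auto].
Qed.

Lemma is_derive_expi_taylor_rem k x :
  is_derive (expi_taylor_rem (S k)) x (Ci * expi_taylor_rem k x)%C.
Proof.
  revert x. induction k as [|k IH]; intros x.
  - replace (Ci * expi_taylor_rem 0 x)%C with (Ci * Cexpi x - 0)%C by (simpl; ring).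
    apply is_derive_Cminus; [apply is_derive_Cexpi|].
    apply (is_derive_ext (V := C_R_NormedModule) (fun _ => RtoC 1)).
    + intros y. unfold expi_taylor_term. simpl. field.
    + apply (is_derive_const (V := C_R_NormedModule)).
  - replace (Ci * expi_taylor_rem (S k) x)%C
      with (Ci * expi_taylor_rem k x - Ci * expi_taylor_term k x)%C
      by (simpl; ring).
    apply is_derive_Cminus; [apply IH | apply is_derive_expi_taylor_term].
Qed.

Lemma expi_taylor_rem_S_0 k : expi_taylor_rem (S k) 0 = 0%C.
Proof.
  induction k as [|k IH].
  - unfold expi_taylor_rem, Cexpi, expi_taylor_term. rewrite cos_0, sin_0.
    change ((1, 0) : C) with (RtoC 1). simpl. field.
  - change (expi_taylor_rem (S k) 0 - expi_taylor_term (S k) 0 = 0)%C.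
    rewrite IH, expi_taylor_term_real, pow_i by lia. unfold Rdiv.
    rewrite Rmult_0_l. ring.
Qed.

Lemma Cmod_expi_taylor_rem_le k x : Cmod (expi_taylor_rem k x) <= 2 ^ k * Rabs x ^ k.
Proof.
  revert x. induction k as [|k IH]; intros x.
  - simpl. rewrite Cmod_Cexpi. lra.
  - replace (2 ^ S k * Rabs x ^ S k) with (2 * (2 ^ k * Rabs x ^ k) * Rabs x) by (simpl; ring).
    apply (Cmod_le_of_derive_bound _ (fun y => Ci * expi_taylor_rem k y)%C).
    + apply is_derive_expi_taylor_rem.
    + apply expi_taylor_rem_S_0.
    + intros y Hy. rewrite Cmod_mult, Cmod_Ci, Rmult_1_l.
      eapply Rle_trans; [apply IH|].
      apply Rmult_le_compat_l; [apply pow_le; lra|].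
      apply pow_incr. split; [apply Rabs_pos | exact Hy].
Qed.

Lemma is_derive_Series (a a' : nat -> R -> R) t :
  (forall n y, is_derive (a n) y (a' n y)) ->
  (forall y, ex_series (fun n => a n y)) ->
  (forall r, 0 < r -> exists M : nat -> R, ex_series M /\
      forall n y, Rabs y < r -> Rabs (a' n y) <= M n) ->
  is_derive (fun y => Series (fun n => a n y)) t (Series (fun n => a' n t)).
Proof.
  intros Hd Hc Hb.
  assert (Hr : 0 < Rabs t + 1) by (pose proof (Rabs_pos t); lra).
  destruct (Hb (Rabs t + 1) Hr) as [M [[l Hl] HM]].
  assert (HM0 : forall n, 0 <= M n).
  { intros n. eapply Rle_trans; [apply Rabs_pos | apply (HM n 0)]. rewrite Rabs_R0; lra. }
  assert (Hnorm : CVN_r a' (mkposreal _ Hr)).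
  { exists M, l. split.
    - apply is_series_Reals in Hl.
      intros eps He. destruct (Hl eps He) as [N HN]. exists N. intros n Hn.
      rewrite (sum_eq _ M); [now apply HN|]. intros i _. apply Rabs_pos_eq, HM0.
    - intros n y Hy. apply HM. unfold Boule in Hy. simpl in Hy.
      now rewrite Rminus_0_r in Hy. }
  destruct (CVN_CVU_r a' _ Hnorm t) as [e He]; [simpl; lra|].
  apply is_derive_Reals.
  apply (CVU_derivable (SP a) (SP a') (fun y => Series (fun n => a n y))
           (fun y => Series (fun n => a' n y)) t e He).
  - intros y _. apply is_series_Reals, Series_correct, Hc.
  - intros n y _. apply is_derive_Reals. unfold SP. induction n as [|n IH]; simpl.
    + apply Hd.
    + apply (is_derive_plus (fun y => sum_f_R0 (fun k => a k y) n) (a (S n))); auto.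
  - unfold Boule. rewrite Rminus_diag, Rabs_R0. apply cond_pos.
Qed.

Lemma CSeries_ext (a b : nat -> C) : (forall n, a n = b n) -> CSeries a = CSeries b.
Proof. intros H. unfold CSeries. f_equal; apply Series_ext; intros n; now rewrite H. Qed.

Lemma is_derive_CSeries (b b' : nat -> R -> C) t :
  (forall n y, is_derive (b n) y (b' n y)) ->
  (forall y, exists M : nat -> R, ex_series M /\ forall n, Cmod (b n y) <= M n) ->
  (forall r, 0 < r -> exists M : nat -> R, ex_series M /\
      forall n y, Rabs y < r -> Cmod (b' n y) <= M n) ->
  is_derive (fun y => CSeries (fun n => b n y)) t (CSeries (fun n => b' n t)).
Proof.
  intros Hd Hc Hb.
  assert (Hsum : forall (P : C -> R), (forall z, Rabs (P z) <= Cmod z) ->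
            forall y, ex_series (fun n => P (b n y))).
  { intros P HP y. destruct (Hc y) as [M [HM HMb]].
    apply (@ex_series_le R_AbsRing R_CompleteNormedModule _ M); auto.
    intros n. eapply Rle_trans; [apply HP | apply HMb]. }
  assert (Hdom : forall (P : C -> R), (forall z, Rabs (P z) <= Cmod z) ->
            forall r, 0 < r -> exists M : nat -> R, ex_series M /\
              forall n y, Rabs y < r -> Rabs (P (b' n y)) <= M n).
  { intros P HP r Hr. destruct (Hb r Hr) as [M [HM HMb]]. exists M; split; auto.
    intros n y Hy. eapply Rle_trans; [apply HP | now apply HMb]. }
  apply is_derive_pair.
  - apply (is_derive_Series (fun n y => Re (b n y)) (fun n y => Re (b' n y))).
    + intros n y. apply is_derive_Re, Hd.
    + apply Hsum, re_le_Cmod.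
    + apply Hdom, re_le_Cmod.
  - apply (is_derive_Series (fun n y => Im (b n y)) (fun n y => Im (b' n y))).
    + intros n y. apply is_derive_Im, Hd.
    + apply Hsum, im_le_Cmod.
    + apply Hdom, im_le_Cmod.
Qed.

Lemma Rabs_Series_le (a M : nat -> R) :
  ex_series M -> (forall n, Rabs (a n) <= M n) -> Rabs (Series a) <= Series M.
Proof.
  intros HM Hb.
  assert (Ha : ex_series (fun n => Rabs (a n))).
  { apply (@ex_series_le R_AbsRing R_CompleteNormedModule _ M); auto.
    intros n. change (Rabs (Rabs (a n)) <= M n). now rewrite Rabs_Rabsolu. }
  eapply Rle_trans; [now apply Series_Rabs|].
  apply Series_le; auto. intros n; split; [apply Rabs_pos | auto].
Qed.

Lemma Cmod_CSeries_le (b : nat -> C) M :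
  ex_series M -> (forall n, Cmod (b n) <= M n) -> Cmod (CSeries b) <= 2 * Series M.
Proof.
  intros HM Hb.
  assert (HRe : Rabs (Re (CSeries b)) <= Series M).
  { apply Rabs_Series_le; auto. intros n. eapply Rle_trans; [apply re_le_Cmod | auto]. }
  assert (HIm : Rabs (Im (CSeries b)) <= Series M).
  { apply Rabs_Series_le; auto. intros n. eapply Rle_trans; [apply im_le_Cmod | auto]. }
  pose proof (Cmod_le_Rabs_Re_Im (CSeries b)). lra.
Qed.

Lemma is_derive_Cscale (f : R -> C) a x l :
  is_derive f (x * a) l -> is_derive (fun y => f (y * a)) x (RtoC a * l)%C.
Proof.
  intros H. rewrite <- scal_R_Cmult.
  apply (is_derive_comp f (fun y => y * a)); [exact H|].
  auto_derive; [auto | ring].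
Qed.

Lemma CSeries_expi_derive_bound (v c : nat -> R) (l s : R) :
  ex_series (fun j => Rabs (c j)) -> is_series (fun j => Rabs (v j * c j)) l ->
  exists d, is_derive (fun y => CSeries (fun j => Cexpi (y * v j) * RtoC (c j))%C) s d
         /\ Cmod d <= 2 * l.
Proof.
  intros Hc Hvc.
  set (b' := fun j y => (Ci * Cexpi (y * v j) * RtoC (v j * c j))%C).
  assert (Hb' : forall j y, Cmod (b' j y) = Rabs (v j * c j)).
  { intros j y. unfold b'. now rewrite !Cmod_mult, Cmod_Ci, Cmod_Cexpi, Cmod_R, !Rmult_1_l. }
  exists (CSeries (fun j => b' j s)). split.
  - apply is_derive_CSeries.
    + intros j y.
      replace (b' j y) with (RtoC (v j) * (Ci * Cexpi (y * v j)) * RtoC (c j))%C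
        by (unfold b'; rewrite RtoC_mult; ring).
      apply is_derive_Cmult_r, is_derive_Cscale, is_derive_Cexpi.
    + intros y. exists (fun j => Rabs (c j)). split; [exact Hc|].
      intros j. rewrite Cmod_mult, Cmod_Cexpi, Cmod_R. lra.
    + intros r _. exists (fun j => Rabs (v j * c j)). split; [eexists; exact Hvc|].
      intros j y _. now rewrite Hb'.
  - rewrite <- (is_series_unique _ _ Hvc).
    apply Cmod_CSeries_le; [eexists; exact Hvc|]. intros j. now rewrite Hb'.
Qed.

Lemma Cmod_expi_taylor_rem_scaled_le k W c y : 0 < W ->
  Cmod (expi_taylor_rem k (y / W) * RtoC c)%C <= 2 ^ k * Rabs y ^ k * (Rabs c / W ^ k).
Proof.
  intros HW. rewrite Cmod_mult, Cmod_R.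
  replace (2 ^ k * Rabs y ^ k * (Rabs c / W ^ k)) with (2 ^ k * Rabs (y / W) ^ k * Rabs c).
  2: { rewrite Rabs_div, (Rabs_pos_eq W) by lra. unfold Rdiv.
       rewrite Rpow_mult_distr, pow_inv. ring. }
  apply Rmult_le_compat_r; [apply Rabs_pos | apply Cmod_expi_taylor_rem_le].
Qed.

Lemma CSeries_expi_taylor_rem_derive_bound (k : nat) (W c : nat -> R) (l t : R) :
  (forall i, 0 < W i) -> is_series (fun i => Rabs (c i) / W i ^ S k) l ->
  exists d,
    is_derive (fun y => CSeries (fun i => expi_taylor_rem (S k) (y / W i) * RtoC (c i))%C) t d
         /\ Cmod d <= 2 ^ S k * Rabs t ^ k * l.
Proof.
  intros HW Hl.
  set (w := fun i => Rabs (c i) / W i ^ S k).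
  assert (Hscal : forall a, ex_series (fun i => a * w i)).
  { intros a. exact (ex_series_scal_l (V := R_NormedModule) a w (ex_intro _ l Hl)). }
  set (b' := fun i y => (Ci * (expi_taylor_rem k (y / W i) * RtoC (c i / W i)))%C).
  assert (Hb' : forall i y, Cmod (b' i y) <= 2 ^ k * Rabs y ^ k * w i).
  { intros i y. unfold b', w. rewrite Cmod_mult, Cmod_Ci, Rmult_1_l.
    eapply Rle_trans; [apply Cmod_expi_taylor_rem_scaled_le, HW|].
    pose proof (HW i). right. rewrite Rabs_div, (Rabs_pos_eq (W i)) by lra.
    simpl. field. split; [apply pow_nonzero|]; lra. }
  exists (CSeries (fun i => b' i t)). split.
  - apply is_derive_CSeries.
    + intros i y.
      replace (b' i y) with (RtoC (/ W i) * (Ci * expi_taylor_rem k (y * / W i)) * RtoC (c i))%C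
        by (unfold b', Rdiv; rewrite RtoC_mult; ring).
      apply is_derive_Cmult_r, is_derive_Cscale, is_derive_expi_taylor_rem.
    + intros y. exists (fun i => 2 ^ S k * Rabs y ^ S k * w i). split; [apply Hscal|].
      intros i. apply Cmod_expi_taylor_rem_scaled_le, HW.
    + intros r Hr. exists (fun i => 2 ^ k * r ^ k * w i). split; [apply Hscal|].
      intros i y Hy. eapply Rle_trans; [apply Hb'|].
      apply Rmult_le_compat_r; [unfold w; pose proof (HW i);
        apply Rdiv_le_0_compat; [apply Rabs_pos | apply pow_lt; lra]|].
      apply Rmult_le_compat_l; [apply pow_le; lra|].
      apply pow_incr. split; [apply Rabs_pos | lra].
  - eapply Rle_trans.
    { apply (Cmod_CSeries_le _ _ (Hscal (2 ^ k * Rabs t ^ k))). intros i. apply Hb'. }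
    rewrite Series_scal_l. unfold w. rewrite (is_series_unique _ _ Hl). simpl. lra.
Qed.

Lemma Rpower_pos x y : 0 < Rpower x y.
Proof. apply exp_pos. Qed.

Lemma Rpower_pow_r x a j : 0 < x -> Rpower x a ^ j = Rpower x (INR j * a).
Proof.
  intros Hx. rewrite <- Rpower_pow by apply Rpower_pos. now rewrite Rpower_mult, Rmult_comm.
Qed.

Lemma one_lt_inv_one_minus p : 0 < p < 1 -> 1 < 1 / (1 - p).
Proof.
  intros Hp. apply (Rmult_lt_reg_r (1 - p)); [lra|].
  unfold Rdiv. rewrite Rmult_assoc, Rinv_l by lra. lra.
Qed.

Lemma is_series_geom_scal (a : nat -> R) A rho : 0 <= rho < 1 ->
  (forall i, a i = A * rho ^ i) -> is_series a (A / (1 - rho)).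
Proof.
  intros Hr Ha. apply (is_series_ext (fun i => A * rho ^ i)); [intros i; now rewrite Ha|].
  apply (is_series_scal_l (V := R_NormedModule) A (fun i => rho ^ i)).
  apply is_series_geom. rewrite Rabs_pos_eq; lra.
Qed.

Lemma gamma_n_pos p n : 0 < p < 1 -> (1 <= n)%nat -> 0 < gamma_n p n.
Proof.
  intros Hp Hn. pose proof (one_lt_inv_one_minus p Hp). unfold gamma_n.
  apply Rdiv_lt_0_compat; [apply lt_0_INR; lia | apply pow_lt; lra].
Qed.

Lemma gamma_n_mul_pow p n : 0 < p < 1 -> gamma_n p n * (1 / (1 - p)) ^ m0 p n = INR n.
Proof.
  intros Hp. pose proof (one_lt_inv_one_minus p Hp). unfold gamma_n.
  field. apply pow_nonzero. lra.
Qed.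

Definition rem_scale (alpha p : R) (n i : nat) : R :=
  Rpower (1 / (1 - p)) (INR (m0 p n + i) / alpha) * Rpower (gamma_n p n) (1 / alpha).

Definition rem_weight (p : R) (n i : nat) : R :=
  p * gamma_n p n / (1 - p) * (1 / (1 - p)) ^ (m0 p n + i).

Lemma rem_scale_pow alpha p n i j : 0 < p < 1 -> (1 <= n)%nat ->
  rem_scale alpha p n i ^ j
  = Rpower (1 / (1 - p)) (INR j * INR (m0 p n + i) / alpha) * Rpower (gamma_n p n) (INR j / alpha).
Proof.
  intros Hp Hn. pose proof (one_lt_inv_one_minus p Hp). pose proof (gamma_n_pos p n Hp Hn).
  unfold rem_scale. rewrite Rpow_mult_distr, !Rpower_pow_r by lra.
  f_equal; f_equal; unfold Rdiv; ring.
Qed.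

Lemma expi_taylor_term_div j t W : W <> 0 ->
  expi_taylor_term j (t / W) = ((Ci * RtoC t) ^ j / RtoC (INR (fact j) * W ^ j))%C.
Proof.
  intros HW. pose proof (INR_fact_neq_0 j).
  unfold expi_taylor_term, Rdiv.
  assert (HWC : RtoC W <> 0%C) by now apply RtoC_neq_0.
  rewrite !RtoC_mult, RtoC_pow, (RtoC_inv W HW), !Cpow_mult_l, (Cpow_inv _ _ HWC).
  field. split; [now apply Cpow_nz | now apply RtoC_neq_0].
Qed.

Lemma R_n1k_expi_taylor_rem alpha p n k t : 0 < p < 1 -> (1 <= n)%nat ->
  R_n1k alpha p n (S k) t
  = (- CSeries (fun i =>
         expi_taylor_rem (S k) (t / rem_scale alpha p n i) * RtoC (rem_weight p n i)))%C.
Proof.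
  intros Hp Hn. unfold R_n1k. cbv zeta. replace (S k - 1)%nat with k by lia.
  f_equal. apply CSeries_ext. intros i. rewrite expi_taylor_rem_S.
  rewrite (sum_n_ext _ (fun j => expi_taylor_term j (t / rem_scale alpha p n i))); [reflexivity|].
  intros j. rewrite Rmult_assoc, <- rem_scale_pow by auto. symmetry.
  apply expi_taylor_term_div. apply Rgt_not_eq, Rmult_lt_0_compat; apply Rpower_pos.
Qed.

Lemma rem_weight_div_scale_pow alpha p n i k : alpha <> 0 -> 0 < p < 1 -> (1 <= n)%nat ->
  rem_weight p n i / rem_scale alpha p n i ^ k
  = p / (1 - p) * Rpower (INR n) (1 - INR k / alpha) * Rpower (1 / (1 - p)) (1 - INR k / alpha) ^ i.
Proof.
  intros Ha Hp Hn. rewrite rem_scale_pow by auto. unfold rem_weight.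
  pose proof (one_lt_inv_one_minus p Hp). pose proof (gamma_n_pos p n Hp Hn).
  rewrite <- (gamma_n_mul_pow p n Hp), <- (Rpower_pow (m0 p n)) by lra.
  set (r := 1 / (1 - p)) in *. set (g := gamma_n p n) in *. set (m := m0 p n).
  set (e := 1 - INR k / alpha).
  rewrite <- (Rpower_mult_distr g (Rpower r (INR m))) by (try apply Rpower_pos; lra).
  rewrite Rpower_mult, Rpower_pow_r, <- (Rpower_pow (m + i)) by lra.
  assert (Hg : Rpower g e = g * / Rpower g (INR k / alpha)).
  { rewrite <- Rpower_Ropp. rewrite <- (Rpower_1 g) at 2 by lra.
    now rewrite <- Rpower_plus. }
  assert (Hr : Rpower r (INR m * e) * Rpower r (INR i * e)
               = Rpower r (INR (m + i)) * / Rpower r (INR k * INR (m + i) / alpha)).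
  { rewrite <- Rpower_Ropp, <- !Rpower_plus. f_equal. unfold e. rewrite plus_INR. field. auto. }
  transitivity (p / (1 - p) * Rpower g e * (Rpower r (INR m * e) * Rpower r (INR i * e))); [|ring].
  rewrite Hg, Hr.
  pose proof (Rpower_pos r (INR k * INR (m + i) / alpha)).
  pose proof (Rpower_pos g (INR k / alpha)).
  field. repeat split; lra.
Qed.

Lemma rem_weight_pos p n i : 0 < p < 1 -> (1 <= n)%nat -> 0 < rem_weight p n i.
Proof.
  intros Hp Hn. pose proof (one_lt_inv_one_minus p Hp). pose proof (gamma_n_pos p n Hp Hn).
  unfold rem_weight. apply Rmult_lt_0_compat; [|apply pow_lt; lra].
  apply Rdiv_lt_0_compat; [apply Rmult_lt_0_compat|]; lra.
Qed.

Lemma R_n1k_derive_bound (k : nat) (alpha p : R) :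
  (2 <= k)%nat -> 1 < alpha < 2 -> 0 < p < 1 ->
  exists C5k : R, 0 < C5k /\
    forall (n : nat) (t : R), (1 <= n)%nat ->
      exists d : C, is_derive (R_n1k alpha p n k) t d /\
        Cmod d <= C5k * Rabs t ^ (k - 1) / Rpower (INR n) ((INR k - alpha) / alpha).
Proof.
  intros Hk Ha Hp. destruct k as [|k]; [lia|].
  set (e := 1 - INR (S k) / alpha). set (rho := Rpower (1 / (1 - p)) e).
  assert (Hrho : 0 < rho < 1).
  { assert (He : e < 0).
    { unfold e. assert (2 <= INR (S k)) by (change 2 with (INR 2); now apply le_INR).
      apply Rlt_minus, (Rmult_lt_reg_r alpha); [lra|].
      unfold Rdiv. rewrite Rmult_assoc, Rinv_l; lra. }
    pose proof (one_lt_inv_one_minus p Hp) as Hr.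
    pose proof (Rpower_lt _ _ _ Hr He) as Hlt. rewrite Rpower_O in Hlt by lra.
    split; [apply Rpower_pos | exact Hlt]. }
  exists (2 ^ S k * (p / (1 - p)) / (1 - rho)). split.
  { apply Rdiv_lt_0_compat; [|lra].
    apply Rmult_lt_0_compat; [apply pow_lt; lra | apply Rdiv_lt_0_compat; lra]. }
  intros n t Hn.
  destruct (CSeries_expi_taylor_rem_derive_bound k (rem_scale alpha p n) (rem_weight p n)
              (p / (1 - p) * Rpower (INR n) e / (1 - rho)) t) as [d [Hd Hdb]].
  - intros i. apply Rmult_lt_0_compat; apply Rpower_pos.
  - apply is_series_geom_scal; [lra|]. intros i. pose proof (rem_weight_pos p n i Hp Hn).
    rewrite Rabs_pos_eq, (rem_weight_div_scale_pow alpha p n i (S k)) by (auto; lra). reflexivity.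
  - exists (- d)%C. split.
    + eapply is_derive_ext.
      { intros y. symmetry. now apply R_n1k_expi_taylor_rem. }
      apply (is_derive_opp (V := C_R_NormedModule) _ _ _ Hd).
    + rewrite Cmod_opp. eapply Rle_trans; [exact Hdb|]. replace (S k - 1)%nat with k by lia.
      right. unfold Rdiv.
      replace e with (- ((INR (S k) - alpha) / alpha)) by (unfold e; field; lra).
      rewrite Rpower_Ropp. unfold Rdiv. ring.
Qed.

Lemma f_ap_derive_bound (alpha p : R) : 1 < alpha -> 0 < p < 1 ->
  exists L : R, 0 < L /\ forall s, exists D : C, is_derive (f_ap alpha p) s D /\ Cmod D <= L.
Proof.
  intros Ha Hp.
  set (q := 1 - p). set (r := 1 / q).
  assert (Hr : 1 < r) by now apply one_lt_inv_one_minus.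
  set (R1 := Rpower r (1 / alpha)). set (rho := R1 * q).
  assert (HR1 : 0 < R1) by apply Rpower_pos.
  assert (Hrho : 0 <= rho < 1).
  { assert (R1 < r).
    { unfold R1. rewrite <- (Rpower_1 r) at 2 by lra. apply Rpower_lt; [lra|].
      apply (Rmult_lt_reg_r alpha); [lra|]. unfold Rdiv. rewrite Rmult_assoc, Rinv_l; lra. }
    unfold rho. split; [unfold q; nra|].
    replace 1 with (r * q) by (unfold r, q; field; lra). unfold q; nra. }
  exists (2 * (p * R1 / (1 - rho))). split.
  { apply Rmult_lt_0_compat; [lra|]. apply Rdiv_lt_0_compat; [apply Rmult_lt_0_compat|]; lra. }
  intros s.
  apply (CSeries_expi_derive_bound (fun j => Rpower r (INR (S j) / alpha)) (fun j => q ^ j * p)).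
  - exists (p / (1 - q)). apply is_series_geom_scal; [unfold q; lra|].
    intros j. rewrite Rabs_pos_eq; [ring|]. apply Rmult_le_pos; [apply pow_le; unfold q|]; lra.
  - apply is_series_geom_scal; [exact Hrho|].
    intros j. rewrite Rabs_pos_eq.
    + unfold rho, R1. rewrite Rpow_mult_distr, Rpower_pow_r, S_INR by lra.
      replace ((INR j + 1) / alpha) with (INR j * (1 / alpha) + 1 / alpha) by (field; lra).
      rewrite Rpower_plus. ring.
    + pose proof (Rpower_pos r (INR (S j) / alpha)).
      apply Rmult_le_pos; [lra | apply Rmult_le_pos; [apply pow_le; unfold q|]; lra].
Qed.

Lemma x_n_derive_bound (alpha p : R) : 1 < alpha -> 0 < p < 1 ->
  exists C5 : R, 0 < C5 /\
    forall (n : nat) (t : R), (1 <= n)%nat ->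
      exists d : C, is_derive (x_n alpha p n) t d /\
        Cmod d <= C5 * Rpower (INR n) ((alpha - 1) / alpha).
Proof.
  intros Ha Hp. destruct (f_ap_derive_bound alpha p Ha Hp) as [L [HL Hf]].
  exists L. split; [exact HL|]. intros n t Hn.
  set (N := Rpower (INR n) (1 / alpha)).
  assert (HN : 0 < N) by apply Rpower_pos.
  destruct (Hf (t / N)) as [D [HD HDb]].
  exists (RtoC (INR n) * (RtoC (/ N) * D))%C. split.
  - unfold x_n. apply is_derive_Cmult_l.
    replace (RtoC (/ N) * D)%C with (RtoC (/ N) * D - 0)%C by ring.
    apply is_derive_Cminus; [now apply is_derive_Cscale|].
    apply (is_derive_const (V := C_R_NormedModule)).
  - assert (HnN : INR n * / N = Rpower (INR n) ((alpha - 1) / alpha)).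
    { replace ((alpha - 1) / alpha) with (1 + - (1 / alpha)) by (field; lra).
      rewrite Rpower_plus, Rpower_Ropp, Rpower_1 by (apply lt_0_INR; lia). reflexivity. }
    rewrite !Cmod_mult, !Cmod_R, !Rabs_pos_eq, <- Rmult_assoc, HnN, Rmult_comm
      by (try apply pos_INR; left; apply Rinv_0_lt_compat, HN).
    apply Rmult_le_compat_r; [left; apply Rpower_pos | exact HDb].
Qed.

Theorem lemma11 :
  (forall (k : nat) (alpha p : R),
     (2 <= k)%nat -> 1 < alpha < 2 -> 0 < p < 1 ->
     exists C5k : R, 0 < C5k /\
       forall (n : nat) (t : R), (1 <= n)%nat ->
         exists d : C, is_derive (R_n1k alpha p n k) t d /\
           Cmod d <= C5k * Rabs t ^ (k - 1) / Rpower (INR n) ((INR k - alpha) / alpha))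
  /\
  (forall (alpha p C2 : R),
     1 < alpha < 2 -> 0 < p < 1 -> 0 < C2 ->
     (forall (n : nat) (t : R), (1 <= n)%nat ->
        Rabs t <= C2 * Rpower (INR n) (1 / alpha) ->
        Cmod (x_n alpha p n t) / INR n <= 1 / 2) ->
     exists C5 : R, 0 < C5 /\
       forall (n : nat) (t : R), (1 <= n)%nat ->
         Rabs t <= C2 * Rpower (INR n) (1 / alpha) ->
         exists d : C, is_derive (x_n alpha p n) t d /\
           Cmod d <= C5 * Rpower (INR n) ((alpha - 1) / alpha)).
Proof.
  split.
  - exact R_n1k_derive_bound.
  (* The bound in (ii) holds for every [t]. *)
  - intros alpha p C2 Ha Hp _ _.
    destruct (x_n_derive_bound alpha p) as [C5 [HC5 Hd]]; [lra | exact Hp |].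
    exists C5. split; [exact HC5|].
    intros n t Hn _. now apply Hd.
Qed.
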